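(* Let $H$ be a complex Hilbert space, let $A$ be a closed symmetric operator in $H$ (its domain $D(A)$ need not be dense) which is invertible, i.e. injective, and let $z\in\mathbb{C}\setminus\mathbb{R}$ be fixed. Let $T$ be a non-expanding linear operator ($\|T\psi\|_H\le\|\psi\|_H$) with $D(T)\subseteq\mathcal{N}_z(A)$, $R(T)\subseteq\mathcal{N}_{\overline{z}}(A)$, which is $z$-admissible with respect to $A$. Let $B$ be the operator defined by $$D(B)=D(A)\dotplus (T-E_H)D(T),\qquad B(f+T\psi-\psi)=Af+zT\psi-\overline{z}\psi,\quad f\in D(A),\ \psi\in D(T).$$ Then the following two conditions are equivalent: (i) the operator $B$ is invertible (injective); (ii) the operator $\frac{z}{\overline{z}}T$ is $\frac{1}{z}$-admissible with respect to the operator $A^{-1}$.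
   Context: $E_H$ is the identity operator on $H$. For a closed symmetric operator $S$ in $H$ and $\lambda\in\mathbb{C}\setminus\mathbb{R}$, set $\mathcal{M}_\lambda(S)=(S-\lambda E_H)D(S)$ and $\mathcal{N}_\lambda(S)=H\ominus\mathcal{M}_\lambda(S)$ (the defect subspace). Note that $A^{-1}$ (with domain $R(A)$) is a closed symmetric operator and $\mathcal{N}_\lambda(A)=\mathcal{N}_{1/\lambda}(A^{-1})$, so $\frac{z}{\overline z}T$ acts from $\mathcal{N}_{1/z}(A^{-1})$ to $\mathcal{N}_{1/\overline{z}}(A^{-1})$. The forbidden operator $X_\lambda(S)$ is the (well-defined) operator with domain $D(X_\lambda(S))=P^H_{\mathcal{N}_\lambda(S)}\big(H\ominus\overline{D(S)}\big)$ given by $X_\lambda(S)P^H_{\mathcal{N}_\lambda(S)}g=P^H_{\mathcal{N}_{\overline{\lambda}}(S)}g$ for $g\in H\ominus\overline{D(S)}$, where $P^H_{M}$ denotes the orthogonal projection onto a subspace $M$. A linear operator $C$ with $D(C)\subseteq\mathcal{N}_\lambda(S)$, $R(C)\subseteq\mathcal{N}_{\overline\lambda}(S)$ is called $\lambda$-admissible with respect to $S$ if there is no nonzero $\psi\in D(C)\cap D(X_\lambda(S))$ with $C\psi=X_\lambda(S)\psi$ (equivalently, $C-X_\lambda(S)$ is injective). *)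

From mathcomp Require Import all_boot all_algebra.
From mathcomp Require Import complex.
From mathcomp Require Import reals.
Import GRing.Theory Num.Theory.
Set Implicit Arguments. Unset Strict Implicit. Unset Printing Implicit Defensive.
Local Open Scope ring_scope.
Local Open Scope complex_scope.

Section Hilbert.
Variable R : realType.
Variable V : lmodType R[i].
Variable inner : V -> V -> R[i].

Definition is_inner_product : Prop :=
  [/\ (forall (a : R[i]) (x y w : V), inner (a *: x + y) w = a * inner x w + inner y w),
      (forall x y : V, inner y x = (inner x y)^*),
      (forall x : V, 0 <= inner x x) &
      (forall x : V, inner x x = 0 -> x = 0)].

Definition hnorm (x : V) : R[i] := sqrtC (inner x x).

Definition converges (u : nat -> V) (l : V) : Prop :=
  forall e : R, 0 < e -> exists N : nat, forall n : nat, (N <= n)%N ->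
    hnorm (u n - l) < e%:C.

Definition cauchy (u : nat -> V) : Prop :=
  forall e : R, 0 < e -> exists N : nat, forall m n : nat, (N <= m)%N -> (N <= n)%N ->
    hnorm (u m - u n) < e%:C.

Definition is_hilbert : Prop :=
  is_inner_product /\ forall u : nat -> V, cauchy u -> exists l : V, converges u l.

Definition subspace (M : V -> Prop) : Prop :=
  M 0 /\ forall (a : R[i]) (x y : V), M x -> M y -> M (a *: x + y).

Definition orth (M : V -> Prop) : V -> Prop :=
  fun g => forall m, M m -> inner g m = 0.

Definition hclosure (M : V -> Prop) : V -> Prop :=
  fun x => forall e : R, 0 < e -> exists m, M m /\ hnorm (x - m) < e%:C.

(* m = P^H_M g : orthogonal projection of g onto the subspace M *)
Definition is_proj (M : V -> Prop) (g m : V) : Prop := M m /\ orth M (g - m).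

(* An operator in H is given by its graph S : V -> V -> Prop
   ((x, y) in the graph iff x \in D(S) and S x = y). *)
Definition linop (S : V -> V -> Prop) : Prop :=
  (forall x y1 y2, S x y1 -> S x y2 -> y1 = y2) /\
  S 0 0 /\
  (forall (a : R[i]) x1 y1 x2 y2, S x1 y1 -> S x2 y2 -> S (a *: x1 + x2) (a *: y1 + y2)).

Definition dom (S : V -> V -> Prop) : V -> Prop := fun x => exists y, S x y.
Definition ran (S : V -> V -> Prop) : V -> Prop := fun y => exists x, S x y.

Definition closed_op (S : V -> V -> Prop) : Prop :=
  forall (u v : nat -> V) (x y : V), (forall n, S (u n) (v n)) ->
    converges u x -> converges v y -> S x y.

Definition symmetric_op (S : V -> V -> Prop) : Prop :=
  forall x1 y1 x2 y2, S x1 y1 -> S x2 y2 -> inner y1 x2 = inner x1 y2.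

Definition closed_symmetric (S : V -> V -> Prop) : Prop :=
  [/\ linop S, closed_op S & symmetric_op S].

Definition injective_op (S : V -> V -> Prop) : Prop :=
  forall x1 x2 y, S x1 y -> S x2 y -> x1 = x2.

Definition inv_op (S : V -> V -> Prop) : V -> V -> Prop := fun y x => S x y.

Definition scale_op (c : R[i]) (S : V -> V -> Prop) : V -> V -> Prop :=
  fun x y => exists y', S x y' /\ y = c *: y'.

Definition Mdef (l : R[i]) (S : V -> V -> Prop) : V -> Prop :=
  fun w => exists x y, S x y /\ w = y - l *: x.
Definition Ndef (l : R[i]) (S : V -> V -> Prop) : V -> Prop := orth (Mdef l S).

(* graph of the forbidden operator X_lambda(S):
   X (P_{N_lambda} g) = P_{N_{conj lambda}} g for g in H (-) closure D(S) *)
Definition forbidden (l : R[i]) (S : V -> V -> Prop) : V -> V -> Prop :=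
  fun psi phi => exists g, orth (hclosure (dom S)) g /\
    is_proj (Ndef l S) g psi /\ is_proj (Ndef l^* S) g phi.

Definition admissible (l : R[i]) (S C : V -> V -> Prop) : Prop :=
  [/\ linop C,
      (forall x, dom C x -> Ndef l S x),
      (forall y, ran C y -> Ndef l^* S y) &
      ~ (exists psi phi, C psi phi /\ psi <> 0 /\ forbidden l S psi phi)].

Definition Bop (z : R[i]) (A T : V -> V -> Prop) : V -> V -> Prop :=
  fun x y => exists f Af psi Tpsi, A f Af /\ T psi Tpsi /\
    x = f + Tpsi - psi /\ y = Af + z *: Tpsi - z^* *: psi.

End Hilbert.

From mathcomp Require Import all_boot all_order all_algebra.
From mathcomp Require Import complex reals classical_sets boolp.
From mathcomp Require Import ring lra.
Import Order.TTheory GRing.Theory Num.Theory.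
Local Open Scope ring_scope.
Local Open Scope complex_scope.

(* For a closed symmetric S and non-real l, ||(S - l)u|| >= |Im l| ||u|| makes the range
   M_l(S) closed, so in a Hilbert space the orthogonal complement of N_l(S) is exactly
   M_l(S).  With this one identifies the forbidden operator: X_l(S) psi = phi iff
   psi \in N_l(S), phi \in N_(conj l)(S) and psi - phi \in D(S).  For S = A^-1 and
   l = 1/z, a nonzero psi with (z/conj z) T psi = X psi gives, with A k = psi - phi, the
   nonzero kernel element k + (T psi - psi)/conj z of B; conversely a kernel element
   f + T psi - psi of B with psi <> 0 gives conj z psi - z T psi = A f, i.e. the nonzero
   vector conj z psi on which (z/conj z) T agrees with X. *)

Lemma eq0_Re_iRe {R : rcfType} (c : R[i]) :
  complex.Re c = 0 -> complex.Re ('i * c) = 0 -> c = 0.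
Proof. by case: c => a b /= -> h; congr Complex; lra. Qed.

Lemma real_conjc {R : rcfType} (c : R[i]) : conjc c = c -> c = (complex.Re c)%:C.
Proof. by case: c => a b /= [h]; congr Complex; lra. Qed.

Lemma conjc_neq_of_Im {R : rcfType} (c : R[i]) : 'Im c != 0 -> conjc c != c.
Proof.
rewrite -complexIm; case: c => a b /=.
by apply: contra => /eqP [h]; apply/eqP; congr (_%:C); lra.
Qed.

Lemma Im_neq0_of_conjc {R : rcfType} (c : R[i]) : conjc c != c -> complex.Im c != 0.
Proof. by case: c => a b /=; apply: contra => /eqP ->; rewrite oppr0. Qed.

Lemma Re_mulcJ {R : rcfType} (c : R[i]) :
  complex.Re (c * conjc c) = complex.Re c ^+ 2 + complex.Im c ^+ 2.
Proof. by case: c => a b /=; ring. Qed.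

Lemma archi_inv {R : realType} {e : R} :
  0 < e -> exists N : nat, forall n, (N <= n)%N -> n.+1%:R^-1 < e.
Proof.
move=> e0; exists (Num.truncn e^-1) => n hn.
rewrite invf_plt ?posrE ?ltr0Sn //.
by apply: lt_le_trans (truncnS_gt _) _; rewrite ler_nat ltnS.
Qed.

Lemma mul_div_add1_le {R : realFieldType} {a e : R} :
  0 <= a -> 0 <= e -> a * (e / (a + 1)) <= e.
Proof.
move=> a0 e0; rewrite mulrCA ler_piMr // ler_pdivrMr ?mul1r; lra.
Qed.

Lemma sub_combination {R : pzRingType} {V : lmodType R} (a b d a' b' d' : V) (s t : R) :
  (a + s *: b - t *: d) - (a' + s *: b' - t *: d') =
  (a - a') + s *: (b - b') - t *: (d - d').
Proof.
rewrite (opprD (a' + s *: b')) opprK (addrACA (a + s *: b)) (opprD a') (addrACA a).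
by rewrite -scalerBr; congr (_ + _); rewrite scalerBr opprB addrC.
Qed.

Lemma injective_opP {R : realType} {V : lmodType R[i]} {S : V -> V -> Prop} : S 0 0 ->
  (forall x1 y1 x2 y2, S x1 y1 -> S x2 y2 -> S (x1 - x2) (y1 - y2)) ->
  injective_op S <-> (forall x, S x 0 -> x = 0).
Proof.
move=> S00 SB; split=> [Sinj x Sx | Sker x1 x2 y S1 S2]; first exact: Sinj Sx S00.
by apply/eqP; rewrite -subr_eq0; apply/eqP/Sker; rewrite -(subrr y); exact: SB.
Qed.

Section Linop.
Context {R : realType} {V : lmodType R[i]} {T : V -> V -> Prop}.
Hypothesis HT : linop T.

Lemma linop_fun {x y1 y2} : T x y1 -> T x y2 -> y1 = y2.
Proof. by case: HT => H _; exact: H. Qed.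

Lemma linop00 : T 0 0.
Proof. by case: HT => _ []. Qed.

Lemma linopDZ a {x1 y1 x2 y2} : T x1 y1 -> T x2 y2 -> T (a *: x1 + x2) (a *: y1 + y2).
Proof. by case: HT => _ [_]; exact. Qed.

Lemma linopZ a {x y} : T x y -> T (a *: x) (a *: y).
Proof. by move/(linopDZ a)/(_ linop00); rewrite !addr0. Qed.

Lemma linopB {x1 y1 x2 y2} : T x1 y1 -> T x2 y2 -> T (x1 - x2) (y1 - y2).
Proof. by move=> h1 /(linopDZ (-1))/(_ h1); rewrite !scaleN1r !(addrC (- _)). Qed.

Lemma linop_scale c : linop (scale_op c T).
Proof.
split; [|split].
- by move=> x _ _ [y1 [Ty1 ->]] [y2 [Ty2 ->]]; rewrite (linop_fun Ty1 Ty2).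
- by exists 0; rewrite scaler0; split; first exact: linop00.
- move=> a x1 _ x2 _ [y1 [Ty1 ->]] [y2 [Ty2 ->]].
  exists (a *: y1 + y2); split; first exact: linopDZ.
  by rewrite scalerDr !scalerA mulrC.
Qed.

Lemma Mdef_subspace l : subspace (Mdef l T).
Proof.
split; first by exists 0, 0; rewrite scaler0 subr0; split; first exact: linop00.
move=> a _ _ [x1 [y1 [T1 ->]]] [x2 [y2 [T2 ->]]].
exists (a *: x1 + x2), (a *: y1 + y2); split; first exact: linopDZ.
by rewrite scalerBr !scalerDr !scalerA (mulrC l a) opprD addrACA.
Qed.
End Linop.

(** * Inner-product spaces *)

Section InnerProduct.
Context {R : realType} {V : lmodType R[i]} {ip : V -> V -> R[i]}.
Hypothesis Hip : is_inner_product ip.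

Lemma ipDZl a x y w : ip (a *: x + y) w = a * ip x w + ip y w.
Proof. by case: Hip. Qed.

(* [rmorphD] and friends produce [conjc] at another instance path than the
   inner-product axiom, which then defeats [rewrite -ipC]. *)
Let conjcD (a b : R[i]) : conjc (a + b) = conjc a + conjc b. Proof. exact: rmorphD. Qed.
Let conjcM (a b : R[i]) : conjc (a * b) = conjc a * conjc b. Proof. exact: rmorphM. Qed.
Let conjcN (a : R[i]) : conjc (- a) = - conjc a. Proof. exact: rmorphN. Qed.

Lemma ipC x y : ip y x = conjc (ip x y).
Proof. by case: Hip. Qed.

Lemma ip0l w : ip 0 w = 0.
Proof.
have := ipDZl 1 0 0 w; rewrite scale1r addr0 mul1r => /eqP.
by rewrite -subr_eq0 opprD addrA subrr sub0r oppr_eq0 => /eqP.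
Qed.

Lemma ipDl x y w : ip (x + y) w = ip x w + ip y w.
Proof. by rewrite -[x]scale1r ipDZl mul1r scale1r. Qed.

Lemma ipZl a x w : ip (a *: x) w = a * ip x w.
Proof. by rewrite -[a *: x]addr0 ipDZl ip0l addr0. Qed.

Lemma ipNl x w : ip (- x) w = - ip x w.
Proof. by rewrite -scaleN1r ipZl mulN1r. Qed.

Lemma ipBl x y w : ip (x - y) w = ip x w - ip y w.
Proof. by rewrite ipDl ipNl. Qed.

Lemma ip0r w : ip w 0 = 0.
Proof. by rewrite ipC ip0l conjc0. Qed.

Lemma ipDr x y w : ip w (x + y) = ip w x + ip w y.
Proof. by rewrite ipC ipDl conjcD -!ipC. Qed.

Lemma ipZr a x w : ip w (a *: x) = conjc a * ip w x.
Proof. by rewrite ipC ipZl conjcM -ipC. Qed.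

Lemma ipNr x w : ip w (- x) = - ip w x.
Proof. by rewrite ipC ipNl conjcN -ipC. Qed.

Lemma ipBr x y w : ip w (x - y) = ip w x - ip w y.
Proof. by rewrite ipDr ipNr. Qed.

Definition normsq x := complex.Re (ip x x).
Definition rinner x y := complex.Re (ip x y).
Definition nrm x := Num.sqrt (normsq x).

Lemma ipxx x : ip x x = (normsq x)%:C.
Proof.
case: Hip => _ _ H _; have := H x; rewrite /normsq.
by case: (ip x x) => a b; rewrite lecE /= => /andP[/eqP -> _].
Qed.

Lemma normsq_ge0 x : 0 <= normsq x.
Proof. by case: Hip => _ _ H _; have := H x; rewrite ipxx ler0c. Qed.

Lemma normsq_eq0 {x} : normsq x = 0 -> x = 0.
Proof. by case: Hip => _ _ _ H h; apply: H; rewrite ipxx h. Qed.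

Lemma normsqE x : normsq x = rinner x x.
Proof. by []. Qed.

Lemma rinnerC x y : rinner y x = rinner x y.
Proof. by rewrite /rinner ipC; case: (ip x y). Qed.

Lemma rinnerDl x y w : rinner (x + y) w = rinner x w + rinner y w.
Proof. by rewrite /rinner ipDl raddfD. Qed.

Lemma rinnerNl x w : rinner (- x) w = - rinner x w.
Proof. by rewrite /rinner ipNl raddfN. Qed.

Lemma rinnerZl (r : R) x w : rinner (r%:C *: x) w = r * rinner x w.
Proof. by rewrite /rinner ipZl; case: (ip x w) => a b /=; ring. Qed.

Lemma rinnerDr x y w : rinner w (x + y) = rinner w x + rinner w y.
Proof. by rewrite rinnerC rinnerDl !(rinnerC w). Qed.

Lemma rinnerNr x w : rinner w (- x) = - rinner w x.
Proof. by rewrite rinnerC rinnerNl rinnerC. Qed.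

Lemma rinnerZr (r : R) x w : rinner w (r%:C *: x) = r * rinner w x.
Proof. by rewrite rinnerC rinnerZl rinnerC. Qed.

Lemma rinnerBr x y w : rinner w (x - y) = rinner w x - rinner w y.
Proof. by rewrite rinnerDr rinnerNr. Qed.

Lemma normsqD x y : normsq (x + y) = normsq x + normsq y + 2 * rinner x y.
Proof. rewrite !normsqE rinnerDl !rinnerDr (rinnerC x y); ring. Qed.

Lemma normsqN x : normsq (- x) = normsq x.
Proof. by rewrite !normsqE rinnerNl rinnerNr opprK. Qed.

Lemma normsqB x y : normsq (x - y) = normsq x + normsq y - 2 * rinner x y.
Proof. rewrite normsqD normsqN rinnerNr; ring. Qed.

Lemma normsqZr (r : R) x : normsq (r%:C *: x) = r ^+ 2 * normsq x.
Proof. rewrite !normsqE rinnerZl rinnerZr; ring. Qed.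

Lemma normsqZ c x :
  normsq (c *: x) = (complex.Re c ^+ 2 + complex.Im c ^+ 2) * normsq x.
Proof.
rewrite /normsq ipZl ipZr mulrA ipxx -Re_mulcJ.
by case: (c * conjc c) => a b /=; ring.
Qed.

Lemma rinner_sqr_le x y : rinner x y ^+ 2 <= normsq x * normsq y.
Proof.
have [y0|ny] := eqVneq (normsq y) 0.
  by rewrite y0 (normsq_eq0 y0) /rinner ip0r mulr0 expr0n.
have ny0 : 0 < normsq y by rewrite lt_def ny normsq_ge0.
have := normsq_ge0 (x - (rinner x y / normsq y)%:C *: y).
rewrite normsqB normsqZr rinnerZr => h; rewrite -subr_ge0.
set r := rinner x y in h *; set t := r / normsq y in h.
have -> : normsq x * normsq y - r ^+ 2 =
    normsq y * (normsq x + t ^+ 2 * normsq y - 2 * (t * r)).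
  by rewrite /t; field; rewrite gt_eqF.
by rewrite mulr_ge0 // ltW.
Qed.

Lemma parallelogram w x y : normsq (x - y) =
  2 * normsq (w - x) + 2 * normsq (w - y) - 4 * normsq (w - (2^-1)%:C *: (x + y)).
Proof.
rewrite !normsqB normsqZr !rinnerZr !rinnerDr normsqD (rinnerC x w) (rinnerC y w).
by field.
Qed.

Lemma nrm_ge0 x : 0 <= nrm x.
Proof. exact: sqrtr_ge0. Qed.

Lemma nrm_sqr x : nrm x ^+ 2 = normsq x.
Proof. exact/sqr_sqrtr/normsq_ge0. Qed.

Lemma nrm_le x y : (nrm x <= nrm y) = (normsq x <= normsq y).
Proof. exact/ler_sqrt/normsq_ge0. Qed.

Lemma nrm_lt_sqr x e : 0 <= e -> (nrm x < e) = (normsq x < e ^+ 2).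
Proof. by move=> e0; rewrite -ltr_sqr ?nnegrE ?nrm_ge0 // nrm_sqr. Qed.

Lemma nrmN x : nrm (- x) = nrm x.
Proof. by rewrite /nrm normsqN. Qed.

Lemma nrmZ c x : nrm (c *: x) = Num.sqrt (complex.Re c ^+ 2 + complex.Im c ^+ 2) * nrm x.
Proof. by rewrite /nrm normsqZ sqrtrM // addr_ge0 ?sqr_ge0. Qed.

Lemma normr_rinner_le x y : `|rinner x y| <= nrm x * nrm y.
Proof.
rewrite -sqrtr_sqr -sqrtrM ?normsq_ge0 // ler_sqrt ?mulr_ge0 ?normsq_ge0 //.
exact: rinner_sqr_le.
Qed.

Lemma nrmD x y : nrm (x + y) <= nrm x + nrm y.
Proof.
rewrite -ler_sqr ?nnegrE ?addr_ge0 ?nrm_ge0 // sqrrD !nrm_sqr normsqD.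
have := normr_rinner_le x y; have := ler_norm (rinner x y); lra.
Qed.

Lemma hnormE x : hnorm ip x = (nrm x)%:C.
Proof. by rewrite /hnorm ipxx -{1}(nrm_sqr x) rmorphXn sqrCK // ler0c nrm_ge0. Qed.

Lemma hnorm_ltE x e : (hnorm ip x < e%:C) = (nrm x < e).
Proof. by rewrite hnormE ltcR. Qed.

Lemma convergesP u l : converges ip u l <->
  (forall e, 0 < e -> exists N, forall n, (N <= n)%N -> nrm (u n - l) < e).
Proof. by split=> h e /h[N HN]; exists N => n /HN; rewrite hnorm_ltE. Qed.

Lemma cauchyP u : cauchy ip u <-> (forall e, 0 < e ->
  exists N, forall m n, (N <= m)%N -> (N <= n)%N -> nrm (u m - u n) < e).
Proof. by split=> h e /h[N HN]; exists N => m n hm /(HN m n hm); rewrite hnorm_ltE. Qed.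

Lemma converges_cauchy {u l} : converges ip u l -> cauchy ip u.
Proof.
move=> /convergesP cu; apply/cauchyP => e e0.
have [N HN] := cu (e / 2) (divr_gt0 e0 (ltr0Sn _ 1)).
exists N => m n /HN hm /HN hn.
have -> : u m - u n = (u m - l) + - (u n - l) by rewrite opprB addrA subrK.
by apply: le_lt_trans (nrmD _ _) _; rewrite nrmN; lra.
Qed.

Lemma converges_lin c x y lx ly : converges ip x lx -> converges ip y ly ->
  converges ip (fun n => c *: x n + y n) (c *: lx + ly).
Proof.
move=> /convergesP cx /convergesP cy; apply/convergesP => e e0.
set K := Num.sqrt (complex.Re c ^+ 2 + complex.Im c ^+ 2).
have K0 : 0 <= K := sqrtr_ge0 _.
have e2 : 0 < e / 2 by rewrite divr_gt0.
have [N1 H1] := cx (e / 2 / (K + 1)) (divr_gt0 e2 (ltr_wpDl K0 ltr01)).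
have [N2 H2] := cy (e / 2) e2.
exists (maxn N1 N2) => n hn.
have h1 := H1 n (leq_trans (leq_maxl _ _) hn).
have h2 := H2 n (leq_trans (leq_maxr _ _) hn).
have -> : c *: x n + y n - (c *: lx + ly) = c *: (x n - lx) + (y n - ly).
  by rewrite scalerBr opprD addrACA.
apply: le_lt_trans (nrmD _ _) _; rewrite nrmZ -/K.
have : K * nrm (x n - lx) <= K * (e / 2 / (K + 1)) by rewrite ler_wpM2l // ltW.
have := mul_div_add1_le K0 (ltW e2); lra.
Qed.

Lemma orth_hclosure D g : orth ip D g -> orth ip (hclosure ip D) g.
Proof.
have rinner0 g' : orth ip D g' -> forall x, hclosure ip D x -> rinner g' x = 0.
  move=> Og' x Dx; apply/eqP; rewrite -normr_le0.
  apply/ler_addgt0Pr => e e0; rewrite add0r.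
  have ng0 := nrm_ge0 g'.
  have [m [Dm]] := Dx (e / (nrm g' + 1)) (divr_gt0 e0 (ltr_wpDl ng0 ltr01)).
  rewrite hnorm_ltE => hm.
  have -> : rinner g' x = rinner g' (x - m) by rewrite rinnerBr /rinner (Og' m Dm) subr0.
  apply: le_trans (normr_rinner_le _ _) _; apply: le_trans (mul_div_add1_le ng0 (ltW e0)).
  by rewrite ler_wpM2l // ltW.
move=> Og x Dx; apply: eq0_Re_iRe; first exact: rinner0 Og x Dx.
rewrite -ipZl; apply: rinner0 Dx => m Dm; by rewrite ipZl Og // mulr0.
Qed.

Lemma hclosure_sub D x : D x -> hclosure ip D x.
Proof. by move=> Dx e e0; exists x; rewrite hnorm_ltE subrr /nrm /normsq ip0l sqrtr0. Qed.

Lemma sub_orth_orth M x : M x -> orth ip (orth ip M) x.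
Proof. by move=> Mx n Nn; rewrite ipC Nn // conjc0. Qed.

Lemma orthZ M c x : orth ip M x -> orth ip M (c *: x).
Proof. by move=> Ox m Mm; rewrite ipZl Ox // mulr0. Qed.

Definition closed_set (M : V -> Prop) :=
  forall u l, (forall n, M (u n)) -> converges ip u l -> M l.

Lemma closed_symmetric_linop {S} : closed_symmetric ip S -> linop S.
Proof. by case. Qed.

Lemma closed_symmetric_ip {S x1 y1 x2 y2} : closed_symmetric ip S ->
  S x1 y1 -> S x2 y2 -> ip y1 x2 = ip x1 y2.
Proof. by case=> _ _; exact. Qed.

Lemma Ndef_graph {l S psi u y} :
  Ndef ip l S psi -> S u y -> ip psi y = conjc l * ip psi u.
Proof.
move=> Npsi Suy; apply/eqP; rewrite -subr_eq0 -ipZr -ipBr.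
by apply/eqP/Npsi; exists u, y.
Qed.

(** * Projection onto closed subspaces *)

Section Complete.
Hypothesis Hcomp : forall u, cauchy ip u -> exists l, converges ip u l.

Section Projection.
Variable M : V -> Prop.
Hypothesis HM : subspace M.
Hypothesis Mclosed : closed_set M.

Let M0 : M 0. Proof. exact: HM.1. Qed.
Let MZ a {x} : M x -> M (a *: x).
Proof. by move=> Mx; have := HM.2 a x 0 Mx M0; rewrite addr0. Qed.
Let MD {x y} : M x -> M y -> M (x + y).
Proof. by move=> Mx My; have := HM.2 1 x y Mx My; rewrite scale1r. Qed.

Lemma minimizing_cauchy {w d} {m : nat -> V} : 0 <= d ->
  (forall x, M x -> d <= nrm (w - x)) -> (forall n, M (m n)) ->
  (forall n, nrm (w - m n) < d + n.+1%:R^-1) -> cauchy ip m.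
Proof.
move=> d0 dlow Mm hm; apply/cauchyP => e e0.
have [t t0 ht] : exists2 t : R, 0 < t & (8 * d + 4) * t = e ^+ 2.
  exists (e ^+ 2 / (8 * d + 4)); last by field; lra.
  by rewrite divr_gt0 ?exprn_gt0 //; lra.
have [N HN] := archi_inv t0.
have bound i : (N <= i)%N -> nrm (w - m i) ^+ 2 < d ^+ 2 + (2 * d + 1) * t.
  move=> /HN ha; have a1 : (i.+1%:R^-1 : R) <= 1 by rewrite invf_le1 ?ltr0Sn // ler1n.
  have a0 : (0 : R) < i.+1%:R^-1 by rewrite invr_gt0 ltr0Sn.
  have : nrm (w - m i) ^+ 2 < (d + i.+1%:R^-1) ^+ 2.
    by rewrite ltr_sqr ?nnegrE ?nrm_ge0 ?(addr_ge0 d0 (ltW a0)) // hm.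
  move: ha a1 a0; move: (i.+1%:R^-1 : R) => a ha a1 a0 hp.
  have : d * a <= d * t by rewrite ler_wpM2l // ltW.
  have : a * a <= a by rewrite ler_piMr // ltW.
  nra.
exists N => n k hn hk; rewrite nrm_lt_sqr ?ltW // (parallelogram w) -!nrm_sqr.
have hmid : d <= nrm (w - (2^-1)%:C *: (m n + m k)) by apply/dlow/MZ/MD.
have : d ^+ 2 <= nrm (w - (2^-1)%:C *: (m n + m k)) ^+ 2.
  by rewrite ler_sqr ?nnegrE ?nrm_ge0.
have := bound n hn; have := bound k hk; lra.
Qed.

Lemma minimizer_exists w :
  exists2 m0, M m0 & forall m, M m -> nrm (w - m0) <= nrm (w - m).
Proof.
pose E : set R := fun r => exists2 m, M m & r = nrm (w - m).
have hE : has_inf E.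
  by split; [exists (nrm (w - 0)), 0 | exists 0 => r [m _ ->]; exact: nrm_ge0].
pose d := inf E.
have dlow m : M m -> d <= nrm (w - m) by move=> Mm; apply: ge_inf hE.2 _ _; exists m.
have d0 : 0 <= d by apply: lb_le_inf hE.1 _ => r [m _ ->]; exact: nrm_ge0.
have /choice[m Hm] : forall n : nat, exists x, M x /\ nrm (w - x) < d + n.+1%:R^-1.
  move=> n; have n0 : (0 : R) < n.+1%:R^-1 by rewrite invr_gt0 ltr0Sn.
  by have [_ [x Mx ->] hr] := inf_adherent n0 hE; exists x.
clearbody d.
have [m0 cm0] := Hcomp _ (minimizing_cauchy d0 dlow (fun n => (Hm n).1) (fun n => (Hm n).2)).
exists m0 => [|x Mx]; first exact: Mclosed (fun n => (Hm n).1) cm0.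
apply: le_trans (dlow x Mx); apply/ler_addgt0Pr => e e0.
have e2 : 0 < e / 2 by rewrite divr_gt0.
have [N1 HN1] := (convergesP _ _).1 cm0 _ e2.
have [N2 HN2] := archi_inv e2.
have h1 := HN1 _ (leq_maxl N1 N2); have h2 := HN2 _ (leq_maxr N1 N2).
have := nrmD (w - m (maxn N1 N2)) (m (maxn N1 N2) - m0); rewrite addrA subrK.
(* the two occurrences of [_.+1%:R^-1] differ in their instances; naming them
   unifies them for [lra] *)
have := (Hm (maxn N1 N2)).2; move: h2; move: (_.+1%:R^-1) => a; lra.
Qed.

Lemma orth_rinner x : (forall m, M m -> rinner x m = 0) -> orth ip M x.
Proof.
move=> h m Mm; apply: eq0_Re_iRe; first exact: h.
have := h _ (MZ (- 'i) Mm); rewrite /rinner ipZr.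
by have -> : conjc (- 'i) = 'i :> R[i] by rewrite /= opprK oppr0.
Qed.

Lemma minimizer_orth {w m0} : M m0 ->
  (forall m, M m -> nrm (w - m0) <= nrm (w - m)) -> orth ip M (w - m0).
Proof.
move=> Mm0 hmin; apply: orth_rinner => m Mm.
set x := w - m0; set r := rinner x m; set K := normsq m + 1.
have K0 : 0 < K by have := normsq_ge0 m; rewrite /K; lra.
have := hmin _ (MD Mm0 (MZ (r / K)%:C Mm)).
rewrite nrm_le opprD addrA -/x (normsqB x) normsqZr rinnerZr -/r => h.
have h1 : 0 <= (r / K) ^+ 2 * normsq m - 2 * (r / K * r) by lra.
have h2 : 0 <= r ^+ 2 * (normsq m - 2 * K).
  have := mulr_ge0 (ltW (exprn_gt0 2 K0)) h1.
  suff -> : K ^+ 2 * ((r / K) ^+ 2 * normsq m - 2 * (r / K * r)) =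
    r ^+ 2 * (normsq m - 2 * K) by [].
  by field; rewrite gt_eqF.
apply/eqP; rewrite -sqrf_eq0 eq_le sqr_ge0 andbT.
have := normsq_ge0 m; rewrite /K in h2; nra.
Qed.

Lemma orth_orth_closed w : orth ip (orth ip M) w -> M w.
Proof.
move=> Ow; have [m0 Mm0 hmin] := minimizer_exists w.
have Ox := minimizer_orth Mm0 hmin.
have h1 : ip w (w - m0) = 0 := Ow _ Ox.
have h2 : ip m0 (w - m0) = 0 by rewrite ipC Ox // conjc0.
suff /eqP : w - m0 = 0 by rewrite subr_eq0 => /eqP ->.
by apply: normsq_eq0; rewrite /normsq ipBl h1 h2 subrr.
Qed.
End Projection.

Section ClosedSymmetric.
Context {S : V -> V -> Prop} {mu : R[i]}.
Hypothesis HS : closed_symmetric ip S.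

Let HSl := closed_symmetric_linop HS.

Lemma Im_nrm_le {u v} : S u v -> `|complex.Im mu| * nrm u <= nrm (v - mu *: u).
Proof.
move=> Suv.
have hr : ip v u = (rinner v u)%:C.
  by apply: real_conjc; rewrite -ipC (closed_symmetric_ip HS Suv Suv).
have h1 : rinner v (mu *: u) = complex.Re mu * rinner v u.
  by rewrite /rinner ipZr hr; case: mu => a b /=; ring.
have h2 := normsq_ge0 (v - (complex.Re mu)%:C *: u).
rewrite normsqB normsqZr rinnerZr in h2.
rewrite -ler_sqr ?nnegrE ?mulr_ge0 ?nrm_ge0 // exprMn real_normK ?num_real // !nrm_sqr.
rewrite normsqB normsqZ h1; lra.
Qed.

Hypothesis Hmu : conjc mu != mu.

Lemma Mdef_closed : closed_set (Mdef mu S).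
Proof.
move=> m m0 Mm cm.
have /choice[p Hp] : forall n, exists p : V * V, S p.1 p.2 /\ m n = p.2 - mu *: p.1.
  by move=> n; have [x [y [Sxy ->]]] := Mm n; exists (x, y).
pose u n := (p n).1; pose v n := (p n).2.
have Suv n : S (u n) (v n) := (Hp n).1.
have cu : cauchy ip u.
  apply/cauchyP => e e0.
  have Imu0 : 0 < `|complex.Im mu| by rewrite normr_gt0 Im_neq0_of_conjc.
  have [N HN] := (cauchyP _).1 (converges_cauchy cm) _ (mulr_gt0 Imu0 e0).
  exists N => i j hi hj; rewrite -(ltr_pM2l Imu0).
  apply: le_lt_trans (HN i j hi hj).
  have -> : m i - m j = v i - v j - mu *: (u i - u j).
    by rewrite !(Hp _).2 scalerBr opprD addrACA -opprD.
  exact: Im_nrm_le (linopB HSl (Suv i) (Suv j)).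
have [u0 cu0] := Hcomp _ cu.
have cv : converges ip v (mu *: u0 + m0).
  suff -> : v = fun n => mu *: u n + m n by exact: converges_lin.
  by apply: funext => n; rewrite (Hp n).2 addrC subrK.
exists u0, (mu *: u0 + m0); split; last by rewrite (addrC (mu *: u0)) addrK.
by case: HS => _ Sclosed _; exact: Sclosed Suv cu0 cv.
Qed.

Lemma Mdef_orth_Ndef {w} : orth ip (Ndef ip mu S) w -> Mdef mu S w.
Proof. exact: orth_orth_closed (Mdef_subspace HSl mu) Mdef_closed w. Qed.
End ClosedSymmetric.

(** * The forbidden operator *)

Section Forbidden.
Context {S : V -> V -> Prop} {l : R[i]}.
Hypothesis HS : closed_symmetric ip S.
Hypothesis Hl : conjc l != l.

Let HSl := closed_symmetric_linop HS.

Lemma forbidden_of_dom {psi phi} : Ndef ip l S psi -> Ndef ip (conjc l) S phi ->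
  dom S (psi - phi) -> forbidden ip l S psi phi.
Proof.
move=> Npsi Nphi [k Shk]; set h := psi - phi in Shk *.
have ll0 : l - conjc l != 0 by rewrite subr_eq0 eq_sym.
set a := (l - conjc l)^-1.
exists (psi + a *: (k - l *: h)); split; last split.
- apply: orth_hclosure => u [y Suy].
  rewrite ipDl ipZl ipBl ipZl (closed_symmetric_ip HS Shk Suy) /h !ipBl.
  rewrite (Ndef_graph Npsi Suy) (Ndef_graph Nphi Suy) conjcK /a.
  by field.
- split => //; rewrite addrC addKr; apply/orthZ/sub_orth_orth.
  by exists h, k.
- split => //.
  have -> : psi + a *: (k - l *: h) - phi = a *: (k - conjc l *: h).
    rewrite addrAC -/h -{1}[h]scale1r -(mulVf ll0) -scalerA -scalerDr.
    by congr (_ *: _); rewrite scalerBl addrC addrA subrK.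
  by apply/orthZ/sub_orth_orth; exists h, k.
Qed.

Lemma forbidden_dom {psi phi} : forbidden ip l S psi phi -> dom S (psi - phi).
Proof.
move=> [g [Og [[Npsi Ogpsi] [Nphi Ogphi]]]].
have Hl' : conjc (conjc l) != conjc l by rewrite conjcK eq_sym.
have [k1 [y1 [S1 E1]]] := Mdef_orth_Ndef HS Hl Ogpsi.
set w := psi - phi - (l - conjc l) *: k1.
have Mw : Mdef (conjc l) S w.
  have -> : w = (-1) *: (y1 - conjc l *: k1) + (g - phi).
    rewrite scaleN1r addrC /w (_ : y1 = g - psi + l *: k1); last by rewrite E1 subrK.
    rewrite -(addrA (g - psi)) -scalerBl opprD addrA; congr (_ - _).
    by rewrite opprB addrC addrA subrK.
  apply: (Mdef_subspace HSl (conjc l)).2; last exact (Mdef_orth_Ndef HS Hl' Ogphi).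
  by exists k1, y1.
have Ow : orth ip (Mdef (conjc l) S) w.
  move=> _ [v [y [Svy ->]]].
  have Og0 : ip g v = 0 by apply: Og; apply: hclosure_sub; exists y.
  have ePsi : ip psi v = l * ip k1 v - ip k1 y.
    have -> : psi = g - (y1 - l *: k1) by rewrite -E1 opprB addrC subrK.
    by rewrite !ipBl ipZl Og0 (closed_symmetric_ip HS S1 Svy) sub0r opprB.
  have ePhi : ip phi (y - conjc l *: v) = 0 by apply: Nphi; exists v, y.
  rewrite /w !ipBl ipZl ePhi !ipBr !ipZr conjcK (Ndef_graph Npsi Svy) ePsi.
  ring.
have /eqP : w = 0 by apply: normsq_eq0; rewrite /normsq Ow.
rewrite subr_eq0 => /eqP ->; exists ((l - conjc l) *: y1); exact: linopZ.
Qed.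
End Forbidden.

(** * Invertibility of B *)

Lemma closed_symmetric_inv {A} : closed_symmetric ip A -> injective_op A ->
  closed_symmetric ip (inv_op A).
Proof.
move=> [[_ [A00 Alin]] Aclosed Asym] Ainj; split.
- split; first by move=> x y1 y2 h1 h2; exact: Ainj h1 h2.
  by split => // a x1 y1 x2 y2; exact: Alin.
- by move=> u v x y h cu cv; exact: Aclosed h cv cu.
- by move=> x1 y1 x2 y2 h1 h2; rewrite (Asym _ _ _ _ h1 h2).
Qed.

Lemma Ndef_inv {A l n} : l != 0 -> Ndef ip l A n <-> Ndef ip l^-1 (inv_op A) n.
Proof.
move=> l0; split=> Nn _ [x [y [Axy ->]]].
- have -> : y - l^-1 *: x = (- l^-1) *: (x - l *: y).
    by rewrite scalerBr scalerA mulNr mulVf // scaleN1r opprK scaleNr addrC.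
  by rewrite ipZr Nn ?mulr0 //; exists y, x.
- have -> : y - l *: x = (- l) *: (x - l^-1 *: y).
    by rewrite scalerBr scalerA mulNr mulfV // scaleN1r opprK scaleNr addrC.
  by rewrite ipZr Nn ?mulr0 //; exists y, x.
Qed.

Section Main.
Context {A T : V -> V -> Prop} {z : R[i]}.
Hypotheses (HA : closed_symmetric ip A) (Ainj : injective_op A).
Hypotheses (Hz : conjc z != z) (HT : admissible ip z A T).

Let HAl := closed_symmetric_linop HA.
Let HAinv := closed_symmetric_inv HA Ainj.
Let HTl : linop T. Proof. by case: HT. Qed.
Let Tdom x : dom T x -> Ndef ip z A x. Proof. by case: HT => _ + _ _; exact. Qed.
Let Tran y : ran T y -> Ndef ip (conjc z) A y. Proof. by case: HT => _ _ + _; exact. Qed.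
Let z0 : z != 0. Proof. by apply: contraNneq Hz => ->; rewrite conjc0. Qed.
Let cz0 : conjc z != 0. Proof. by rewrite conjc_eq0. Qed.
Let Hzinv : conjc z^-1 != z^-1.
Proof. by rewrite conjc_inv; apply: contra Hz => /eqP /invr_inj ->. Qed.

Lemma admissible_inv_scaleE :
  admissible ip z^-1 (inv_op A) (scale_op (z / conjc z) T) <->
  ~ exists psi phi, [/\ scale_op (z / conjc z) T psi phi, psi <> 0 &
                        forbidden ip z^-1 (inv_op A) psi phi].
Proof.
split=> [[_ _ _ NF] [psi [phi [Cpsi psi0 Fpsi]]] | NF]; first by apply: NF; exists psi, phi.
split; first exact: linop_scale.
- by move=> x [_ [y [Ty _]]]; apply/(Ndef_inv z0)/Tdom; exists y.
- move=> _ [x [y [Ty ->]]]; rewrite conjc_inv; apply/(Ndef_inv cz0).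
  by apply/orthZ/Tran; exists x.
- by move=> [psi [phi [Cpsi [psi0 Fpsi]]]]; apply: NF; exists psi, phi.
Qed.

Lemma Bop00 : Bop z A T 0 0.
Proof.
exists 0, 0, 0, 0; split; first exact: linop00.
by split; [exact: linop00 | rewrite !scaler0 !addr0 subr0].
Qed.

Lemma BopB x1 y1 x2 y2 :
  Bop z A T x1 y1 -> Bop z A T x2 y2 -> Bop z A T (x1 - x2) (y1 - y2).
Proof.
move=> [f1 [Af1 [p1 [Tp1 [A1 [T1 [-> ->]]]]]]] [f2 [Af2 [p2 [Tp2 [A2 [T2 [-> ->]]]]]]].
exists (f1 - f2), (Af1 - Af2), (p1 - p2), (Tp1 - Tp2).
split; first exact: linopB.
split; first exact: linopB.
split; last exact: sub_combination.
by have := sub_combination f1 Tp1 p1 f2 Tp2 p2 1 1; rewrite !scale1r.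
Qed.

Lemma Bop_kernel_forbidden {x} : Bop z A T x 0 -> x <> 0 ->
  exists psi phi, [/\ scale_op (z / conjc z) T psi phi, psi <> 0 &
                      forbidden ip z^-1 (inv_op A) psi phi].
Proof.
move=> [f [Af [p [Tp [Af_ [Tp_ [-> Hy]]]]]]] x0.
have eAf : Af = conjc z *: p - z *: Tp.
  by apply/eqP; rewrite -subr_eq0 opprB addrA Hy.
have [p0|pn0] := eqVneq p 0.
  have Tp0 : Tp = 0 by rewrite p0 in Tp_; apply: (linop_fun HTl Tp_); exact: linop00.
  move: Af_; rewrite eAf p0 Tp0 !scaler0 subr0 => Af0.
  have f0 := Ainj _ _ _ Af0 (linop00 HAl).
  by case: x0; rewrite -f0 p0 Tp0 !addr0 subr0.
exists (conjc z *: p), (z *: Tp); split.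
- exists (conjc z *: Tp); split; first exact: linopZ.
  by rewrite scalerA mulfVK.
- by apply/eqP; rewrite scaler_eq0 negb_or cz0.
apply: (forbidden_of_dom HAinv Hzinv).
- by apply/(Ndef_inv z0)/orthZ/Tdom; exists Tp.
- by rewrite conjc_inv; apply/(Ndef_inv cz0)/orthZ/Tran; exists p.
- by exists f; rewrite -eAf.
Qed.

Lemma forbidden_Bop_kernel {psi phi} :
  scale_op (z / conjc z) T psi phi -> forbidden ip z^-1 (inv_op A) psi phi ->
  exists2 x, Bop z A T x 0 & (x = 0 -> psi = 0).
Proof.
move=> [y [Ty ephi]] Fpsi.
have [k Ak] := forbidden_dom HAinv Hzinv Fpsi.
set c := (conjc z)^-1.
exists (k + c *: y - c *: psi).
  exists k, (psi - phi), (c *: psi), (c *: y); split; first exact: Ak.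
  split; first exact: linopZ.
  by rewrite ephi !scalerA mulfV // scale1r subrK subrr.
move=> /eqP; rewrite -(addrA k) addr_eq0 opprB => /eqP ek.
have Npsi : Ndef ip z^-1 (inv_op A) psi by apply/(Ndef_inv z0)/Tdom; exists y.
have Mk : Mdef z^-1 (inv_op A) (k - z^-1 *: (psi - phi)) by exists (psi - phi), k.
have := Npsi _ Mk; rewrite ek ephi !(ipBr, ipZr).
have -> : conjc c = z^-1 by rewrite /c conjc_inv conjcK.
have -> : conjc z^-1 = c by rewrite conjc_inv.
have -> : conjc (z / conjc z) = conjc z / z by rewrite conjcM conjc_inv conjcK.
move=> h; have : (z^-1 - c) * ip psi psi = 0.
  by rewrite -h /c; field; rewrite z0 cz0.
move/eqP; rewrite mulf_eq0 subr_eq0 => /orP[/eqP /invr_inj ezc | /eqP].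
  by move: Hz; rewrite -ezc eqxx.
by rewrite ipxx => /(congr1 (@complex.Re _)) /normsq_eq0.
Qed.
End Main.
End Complete.
End InnerProduct.

Theorem theorem1 (R : realType) (V : lmodType R[i]) (inner : V -> V -> R[i])
  (A T : V -> V -> Prop) (z : R[i]) :
  is_hilbert inner ->
  closed_symmetric inner A ->
  injective_op A ->
  'Im z != 0 ->
  (forall psi Tpsi, T psi Tpsi -> hnorm inner Tpsi <= hnorm inner psi) ->
  admissible inner z A T ->
  (injective_op (Bop z A T) <->
   admissible inner z^-1 (inv_op A) (scale_op (z / z^*) T)).
Proof.
move=> [Hip Hcomp] HA Ainj /conjc_neq_of_Im Hz _ HT.
rewrite (injective_opP (Bop00 HA HT) (BopB HA HT)) (admissible_inv_scaleE Hip Hz HT).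
split=> [Bker [psi [phi [Cpsi psi0 Fpsi]]] | NF x Bx].
- have [x /Bker x0 /(_ x0)] := forbidden_Bop_kernel Hip Hcomp HA Ainj Hz HT Cpsi Fpsi.
  exact: psi0.
- apply: contra_notP NF => x0.
  (* [z^*] here is [Num.conj z], which is [conjc z] only up to conversion *)
  exact (Bop_kernel_forbidden Hip HA Ainj Hz HT Bx x0).
Qed.
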